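(* For integers $n\geq 3$, $p\geq 2$ and $m \geq 1$, $\chi_\rho(FSSD_m(K_n\star P_p)) = n+3$.
   Context: All graphs are finite and simple. For a positive integer $i$, an $i$-packing in a graph is a set of vertices any two distinct members of which are at distance greater than $i$. The packing chromatic number $\chi_\rho(H)$ is the smallest $k$ such that $V(H)$ can be partitioned into sets $V_1,\dots,V_k$ with each $V_i$ an $i$-packing. For a positive integer $m$, $FSSD_m(G)$ is obtained from $G$ by replacing each edge $xy$ by a copy of $K_{2,m}$: the edge $xy$ is deleted and $m$ new vertices are added, each adjacent to exactly $x$ and $y$. The neighborhood corona $G\star H$ of graphs $G$ (with vertices $w_1,\dots,w_{n}$) and $H$ consists of one copy of $G$ and $n$ copies $H_1,\dots,H_n$ of $H$ (each retaining the edges of $H$), where every vertex of $H_i$ is additionally joined to every neighbor of $w_i$ in $G$. $K_n$ is the complete graph and $P_p$ the path on $p$ vertices. *)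

From mathcomp Require Import all_boot.
Set Implicit Arguments. Unset Strict Implicit. Unset Printing Implicit Defensive.

Definition simple_graph (T : finType) (e : rel T) : Prop :=
  symmetric e /\ irreflexive e.

Definition dist_le (T : finType) (e : rel T) (i : nat) (x y : T) : Prop :=
  exists s : seq T, [/\ size s <= i, path e x s & last x s = y].

Definition is_packing (T : finType) (e : rel T) (i : nat) (S : {set T}) : Prop :=
  forall x y, x \in S -> y \in S -> x != y -> ~ dist_le e i x y.

(* A packing k-colouring: colour j : 'I_k stands for colour j+1,
   and the class of colour j+1 must be a (j+1)-packing. *)
Definition packing_coloring (T : finType) (e : rel T) (k : nat) (c : T -> 'I_k) : Prop :=
  forall j : 'I_k, is_packing e j.+1 [set x | c x == j].

Definition packing_colorable (T : finType) (e : rel T) (k : nat) : Prop :=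
  exists c : T -> 'I_k, packing_coloring e c.

Definition packing_chromatic_number_is (T : finType) (e : rel T) (k : nat) : Prop :=
  packing_colorable e k /\ forall k', packing_colorable e k' -> k <= k'.

Definition K_rel (n : nat) : rel 'I_n := fun x y => x != y.
Definition P_rel (p : nat) : rel 'I_p :=
  fun x y => (x.+1 == y :> nat) || (y.+1 == x :> nat).

(* Neighborhood corona G * H : vertices inl w (copy of G) and inr (i,u)
   (vertex u of the copy H_i); H_i-vertices are joined to N_G(w_i). *)
Definition ncorona_rel (T U : finType) (e : rel T) (f : rel U) : rel (T + (T * U)) :=
  fun a b =>
    match a, b with
    | inl x, inl y => e x y
    | inr (i, u), inr (j, v) => (i == j) && f u v
    | inl x, inr (i, _) => e i x
    | inr (i, _), inl x => e i x
    end.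

(* FSSD_m(G): each edge {x,y} (recorded once as (x,y) with rank x < rank y)
   is replaced by m new vertices adjacent to exactly x and y. *)
Definition fssd_new (T : finType) (e : rel T) (m : nat) :=
  {t : T * T * 'I_m | e t.1.1 t.1.2 && (enum_rank t.1.1 < enum_rank t.1.2)}.

Definition fssd_rel (T : finType) (e : rel T) (m : nat) : rel (T + fssd_new e m) :=
  fun a b =>
    match a, b with
    | inl x, inr t => (x == (val t).1.1) || (x == (val t).1.2)
    | inr t, inl x => (x == (val t).1.1) || (x == (val t).1.2)
    | _, _ => false
    end.

Arguments fssd_rel {T} e m.
Arguments ncorona_rel {T U} e f.
Arguments K_rel : clear implicits.
Arguments P_rel : clear implicits.

From mathcomp Require Import all_boot zify.
Set Implicit Arguments. Unset Strict Implicit. Unset Printing Implicit Defensive.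

(* Colours below are those of the paper; in the code a colour [c : 'I_k] is colour [c + 1].
   Distances between original vertices double in FSSD_m, and K_n ⋆ P_p has diameter 2.
   For the upper bound, colour the subdivision vertices 1, each copy of P_p alternately 2 and 3,
   and w_1, ..., w_n with 4, ..., n + 3.
   For the lower bound, assume n + 2 colours. The w_l get pairwise distinct colours, none of
   them 1 (the n + 2 subdivision neighbours of such a w_l would need distinct colours), so at
   most one colour is free, i.e. missing on the w_l. An original vertex of colour >= 4, and a
   subdivision vertex next to some w_l with colour >= 3, must take the free colour. If no
   vertex of a copy H_j has colour 1, the ends of an edge of a suitable copy can neither both
   take the free colour nor share a colour in {2, 3}. If a vertex of H_i has colour 1, its
   subdivision neighbours force n = 3, some w_a of colour 2 and colour 3 or 4 on w_i; whether
   or not colour 3 occurs on the w_l, the remaining copy H_j cannot be coloured. *)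

Section Walks.
Variables (T : finType) (e : rel T).

Lemma dist_le_refl d x : dist_le e d x x.
Proof. by exists [::]. Qed.

Lemma dist_le_edge x y : e x y -> dist_le e 1 x y.
Proof. by move=> exy; exists [:: y]; rewrite /= exy. Qed.

Lemma dist_le1_edge x y : dist_le e 1 x y -> x != y -> e x y.
Proof.
case=> -[|z [|? ?]] [] //= _; first by move=> _ <-; rewrite eqxx.
by rewrite andbT => exz <-.
Qed.

Lemma dist_le_cat d1 d2 x y z :
  dist_le e d1 x y -> dist_le e d2 y z -> dist_le e (d1 + d2) x z.
Proof.
move=> [s1 [h1 p1 l1]] [s2 [h2 p2 l2]]; exists (s1 ++ s2); split.
- by rewrite size_cat leq_add.
- by rewrite cat_path p1 l1 p2.
- by rewrite last_cat l1.
Qed.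

Lemma dist_le_leq d1 d2 x y : d1 <= d2 -> dist_le e d1 x y -> dist_le e d2 x y.
Proof. by move=> le12 [s [hs ps ls]]; exists s; split=> //; apply: leq_trans le12. Qed.

Lemma dist_le_sym d x y : symmetric e -> dist_le e d x y -> dist_le e d y x.
Proof.
move=> esym [s [hs ps <-]]; exists (rev (belast x s)); split.
- by rewrite size_rev size_belast.
- by rewrite rev_path; apply: sub_path ps => a b; rewrite esym.
- by case/lastP: s {hs ps} => // s z; rewrite belast_rcons rev_cons last_rcons.
Qed.

Lemma packing_coloring_neq k (c : T -> 'I_k) d x y :
  packing_coloring e c -> dist_le e d x y -> d <= (c x).+1 -> x != y ->
  c x != c y :> nat.
Proof.
move=> hc dxy hd neq_xy; apply/negP => /eqP /val_inj cxy.
by apply: (hc (c x) x y _ _ neq_xy (dist_le_leq hd dxy)); rewrite inE cxy.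
Qed.

End Walks.

Lemma uniq_size_range (s : seq nat) lo hi :
  uniq s -> (forall y, y \in s -> lo <= y < hi) -> size s <= hi - lo.
Proof.
move=> us hs; rewrite -(size_iota lo (hi - lo)); apply: uniq_leq_size us _ => y /hs.
by rewrite mem_iota; lia.
Qed.

Lemma exists_ord_notin n (s : seq 'I_n) : size s < n -> exists l, l \notin s.
Proof.
move=> hs; case: (pickP [pred l | l \notin s]) => [l hl|hnone]; first by exists l.
suff : n <= size s by lia.
rewrite -{1}(size_enum_ord n); apply: uniq_leq_size (enum_uniq _) _ => l _.
by move: (hnone l) => /= /negbFE.
Qed.

Section Subdivision.
Variables (T : finType) (e : rel T) (m : nat).
Hypotheses (esym : symmetric e) (eirr : irreflexive e) (m_gt0 : 0 < m).

Local Notation E := (fssd_rel e m).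

Lemma fssd_rel_sym : symmetric E.
Proof. by case=> [x|t] [y|t']. Qed.

Lemma enum_rank_edge a b : e a b -> enum_rank a != enum_rank b :> nat.
Proof. by apply: contraTN => /eqP /val_inj /enum_rank_inj ->; rewrite eirr. Qed.

(* The [r]-th new vertex on the edge [ab]; junk ([inl a]) if [ab] is not an edge. *)
Definition subv (a b : T) (r : 'I_m) : T + fssd_new e m :=
  let t := if enum_rank a < enum_rank b then (a, b, r) else (b, a, r) in
  if insub t is Some s then inr s else inl a.

Lemma subv_inr a b r : e a b ->
  {s | subv a b r = inr s & val s = if enum_rank a < enum_rank b then (a, b, r) else (b, a, r)}.
Proof.
move=> eab; rewrite /subv; case: insubP => [s _ <-|]; first by exists s.
have := enum_rank_edge eab; case: ltngtP => //= [lt_ab|lt_ba] _.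
- by rewrite eab lt_ab.
- by rewrite esym eab lt_ba.
Qed.

Lemma subvC a b r : e a b -> subv a b r = subv b a r.
Proof.
move=> eab; have eba : e b a by rewrite esym.
have [s -> vs] := subv_inr r eab; have [s' -> vs'] := subv_inr r eba.
congr inr; apply: val_inj; rewrite vs vs'; have := enum_rank_edge eab.
by case: ltngtP.
Qed.

Lemma fssd_rel_subv a b r : e a b -> E (inl a) (subv a b r) && E (inl b) (subv a b r).
Proof. by case/(subv_inr r) => s -> /= ->; case: ifP; rewrite /= !eqxx ?orbT. Qed.

Lemma subv_neq_inl a b r x : e a b -> subv a b r != inl x.
Proof. by case/(subv_inr r) => s ->. Qed.

Lemma subv_inj a b b' r r' : e a b -> e a b' ->
  subv a b r = subv a b' r' -> b = b' /\ r = r'.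
Proof.
move=> /(subv_inr r) [s -> vs] /(subv_inr r') [s' -> vs'] [ss']; move: vs'.
rewrite -ss' vs; by do 2 case: ifP => _; move=> [] *; subst.
Qed.

Lemma dist_le_subv_end a b r : e a b -> dist_le E 1 (subv a b r) (inl a).
Proof.
by move=> eab; apply: dist_le_edge; rewrite fssd_rel_sym; case/andP: (fssd_rel_subv r eab).
Qed.

Lemma dist_le_end_subv a b r : e a b -> dist_le E 1 (inl a) (subv a b r).
Proof. by move=> eab; apply: dist_le_sym (dist_le_subv_end r eab); apply: fssd_rel_sym. Qed.

Let r0 : 'I_m := Ordinal m_gt0.

Lemma dist_le_fssd d a b : dist_le e d a b -> dist_le E d.*2 (inl a) (inl b).
Proof.
case=> s [hs ps <-] {b}; elim: s a d hs ps => [|x s IHs] a [|d] //= hs.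
- by move=> _; apply: dist_le_refl.
- by move=> _; apply: dist_le_refl.
case/andP=> eax /(IHs x d hs) dx; rewrite doubleS -[_.+2]/(1 + 1 + d.*2).
apply: dist_le_cat dx; apply: dist_le_cat (dist_le_end_subv r0 eax) _.
by rewrite subvC //; apply: dist_le_subv_end; rewrite esym.
Qed.

Lemma dist_le_subv d a b x r : e a b -> dist_le e d a x -> dist_le E d.*2.+1 (subv a b r) (inl x).
Proof. by move=> eab /dist_le_fssd; apply: dist_le_cat (dist_le_subv_end r eab). Qed.

Lemma fssd_dist_le3_adj a b : dist_le E 3 (inl a) (inl b) -> a != b -> e a b.
Proof.
case=> s [hs ps ls]; move: hs ps ls.
case: s => [|[x|t] [|[y|t'] [|z [|? ?]]]] //= _.
- by move=> _ [->]; rewrite eqxx.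
- rewrite andbT => /andP [+ +] [<-]; case: t => [[[u v] r] /= /andP [euv _]].
  by do 2 case/orP => /eqP ->; rewrite ?eqxx // esym.
- by case: z => [?|?] /=; rewrite ?andbF // => _ [].
- by rewrite andbF.
Qed.

Variables (k : nat) (c : T + fssd_new e m -> 'I_k).
Hypothesis hc : packing_coloring E c.
Local Notation col x := (nat_of_ord (c x)).

Lemma col_fssd_adj a b : e a b -> 0 < col (inl a) -> col (inl a) != col (inl b).
Proof.
move=> eab pos_a; apply: (packing_coloring_neq hc (dist_le_fssd (dist_le_edge eab))) => //.
by apply: contraTneq eab => -[->]; rewrite eirr.
Qed.

Lemma col_subv_end a b r : e a b -> col (subv a b r) != col (inl a).
Proof.
move=> eab; apply: packing_coloring_neq hc (dist_le_subv_end r eab) _ _ => //.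
exact: subv_neq_inl.
Qed.

Lemma col_subv_gt0 a b r : e a b -> col (inl a) = 0 -> 0 < col (subv a b r).
Proof. by move=> eab col_a; rewrite lt0n -col_a col_subv_end. Qed.

Lemma col_subv_neq a b b' r r' : e a b -> e a b' -> b != b' ->
  0 < col (subv a b r) -> col (subv a b r) != col (subv a b' r').
Proof.
move=> eab eab' neq pos; have d2 := dist_le_cat (dist_le_subv_end r eab) (dist_le_end_subv r' eab').
apply: (packing_coloring_neq hc d2) => //.
by apply: contra neq => /eqP /(subv_inj eab eab') [->].
Qed.

Lemma col_zero_degree a (s : seq T) :
  col (inl a) = 0 -> uniq s -> all (e a) s -> size s < k.
Proof.
move=> col_a us /allP eas; have := ltn_ord (c (inl a)); rewrite col_a => k_gt0.
suff : size [seq col (subv a b r0) | b <- s] <= k - 1 by rewrite size_map; lia.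
apply: uniq_size_range.
- rewrite map_inj_in_uniq // => b b' /eas eab /eas eab'; apply: contra_eq => neq.
  by apply: col_subv_neq; rewrite ?col_subv_gt0.
- by move=> y /mapP [b /eas eab ->]; rewrite (col_subv_gt0 r0 eab col_a) ltn_ord.
Qed.

End Subdivision.

Section Corona.
Variables (n p : nat).
Local Notation G := (ncorona_rel (K_rel n) (P_rel p)).

Lemma P_rel_sym : symmetric (P_rel p).
Proof. by move=> u v; rewrite /P_rel orbC. Qed.

Lemma P_rel_odd u v : P_rel p u v -> odd u != odd v.
Proof. by case/orP => /eqP <- /=; case: (odd _). Qed.

Lemma ncorona_sym : symmetric G.
Proof.
case=> [x|[i u]] [y|[j v]] //=; first by rewrite /K_rel eq_sym.
by rewrite eq_sym P_rel_sym.
Qed.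

Lemma ncorona_irr : irreflexive G.
Proof. by case=> [x|[i u]] /=; rewrite /K_rel ?eqxx //= /P_rel orbb; apply/eqP; lia. Qed.

Definition idx (x : 'I_n + 'I_n * 'I_p) : 'I_n :=
  match x with inl l => l | inr (i, _) => i end.

Lemma ncorona_hub l x : G (inl l) x = (l != idx x).
Proof. by case: x => [y|[i u]]; rewrite /= /K_rel // eq_sym. Qed.

Lemma dist_le_hubs l l' : dist_le G 1 (inl l) (inl l').
Proof.
case: (eqVneq l l') => [->|neq]; first exact: dist_le_refl.
by apply: dist_le_edge; rewrite ncorona_hub.
Qed.

Lemma dist_le_ncorona x y : 2 < n -> dist_le G 2 x y.
Proof.
move=> n_gt2; have [l] := @exists_ord_notin n [:: idx x; idx y] n_gt2.
rewrite !inE negb_or => /andP [lx ly].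
apply: (@dist_le_cat _ _ 1 1 _ (inl l)); apply: dist_le_edge.
  by rewrite ncorona_sym ncorona_hub.
by rewrite ncorona_hub.
Qed.

Lemma P_rel_neighbor q : 1 < p -> exists v, P_rel p q v.
Proof.
move=> p_gt1; case: (ltnP q.+1 p) => [lt_q1|le_pq1].
  by exists (Ordinal lt_q1); rewrite /P_rel /= eqxx.
have lt_q : q.-1 < p by have := ltn_ord q; lia.
by exists (Ordinal lt_q); rewrite /P_rel /=; apply/orP; right; apply/eqP; lia.
Qed.

End Corona.

Section UpperBound.
Variables (n p m : nat).
Local Notation G := (ncorona_rel (K_rel n) (P_rel p)).
Local Notation E := (fssd_rel G m).
Local Notation V := ('I_n + 'I_n * 'I_p + fssd_new G m)%type.

Definition corona_color (x : V) : nat :=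
  match x with
  | inl (inl l) => l + 3
  | inl (inr (_, u)) => (odd u).+1
  | inr _ => 0
  end.

Lemma corona_color_lt x : corona_color x < n + 3.
Proof. by case: x => [[l|[i u]]|t] /=; [rewrite ltn_add2r | case: (odd u); lia | lia]. Qed.

Definition corona_coloring (x : V) : 'I_(n + 3) := Ordinal (corona_color_lt x).

Lemma corona_coloring_packing : packing_coloring E corona_coloring.
Proof.
move=> j x y; rewrite !inE => /eqP cx /eqP cy neq.
have cxy : corona_color x = corona_color y.
  by rewrite -[LHS]/(val (corona_coloring x)) -[RHS]/(val (corona_coloring y)) cx cy.
rewrite -cx /=; case: x y neq cxy {cx cy} => [[l|[i u]]|t] [[l'|[i' u']]|t'] //= neq cxy.
- by move: neq; rewrite (val_inj (addIn cxy)) eqxx.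
- by case: (odd u') cxy; lia.
- lia.
- by case: (odd u) cxy; lia.
- have le3 : (odd u).+2 <= 3 by case: (odd u).
  move=> /(dist_le_leq le3) /(fssd_dist_le3_adj (@ncorona_sym n p)) /(_ neq) /andP [_].
  by move/P_rel_odd; case: (odd u) (odd u') cxy => -[].
- lia.
- by move=> /dist_le1_edge /(_ neq).
Qed.

End UpperBound.

Section LowerBound.
Variables (n p m : nat).
Hypotheses (n_gt2 : 2 < n) (p_gt1 : 1 < p) (m_gt0 : 0 < m).
Local Notation G := (ncorona_rel (K_rel n) (P_rel p)).
Local Notation E := (fssd_rel G m).
(* [w l] is the vertex w_l of K_n and [h i u] the vertex u of the copy H_i. All type arguments
   are explicit, here and in [ocol], to keep terms syntactically uniform, as [lia] needs. *)
Local Notation w l := (@inl 'I_n ('I_n * 'I_p) l).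
Local Notation h i u := (@inr 'I_n ('I_n * 'I_p) (@pair 'I_n 'I_p i u)).
Local Notation sub a b r := (subv G a b r).
Let G_sym := @ncorona_sym n p.
Let G_irr := @ncorona_irr n p.
Let r0 : 'I_m := Ordinal m_gt0.
Let u0 : 'I_p := Ordinal (ltnW p_gt1).
Let u1 : 'I_p := Ordinal p_gt1.

Lemma path_edge_adj j : G (h j u0) (h j u1).
Proof. by rewrite /= eqxx /P_rel eqxx. Qed.

Variables (k : nat) (c : 'I_n + 'I_n * 'I_p + fssd_new G m -> 'I_k).
Hypotheses (hc : packing_coloring E c) (k_le : k <= n + 2).
Local Notation col x := (nat_of_ord (c x)).
Local Notation ocol x := (col (@inl ('I_n + 'I_n * 'I_p) (fssd_new G m) x)).

Lemma col_adj x y : G x y -> 0 < ocol x -> ocol x != ocol y.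
Proof. by move=> exy; have := col_fssd_adj G_sym G_irr m_gt0 hc exy. Qed.

Lemma col_far x y : x != y -> 2 < ocol x -> ocol x != ocol y.
Proof.
move=> neq col_x.
by apply: (packing_coloring_neq hc (dist_le_fssd G_sym G_irr m_gt0 (dist_le_ncorona x y n_gt2))).
Qed.

Lemma col_subv_far x y z r : G x y -> 3 < col (sub x y r) -> col (sub x y r) != ocol z.
Proof.
move=> exy col_s; have dxz := dist_le_ncorona x z n_gt2.
by apply: (packing_coloring_neq hc (dist_le_subv G_sym G_irr m_gt0 r exy dxz)); rewrite ?subv_neq_inl.
Qed.

Lemma col_subv_hub x y l r : dist_le G 1 x (w l) -> G x y -> 1 < col (sub x y r) ->
  col (sub x y r) != ocol (w l).
Proof.
move=> dxl exy col_s.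
by apply: (packing_coloring_neq hc (dist_le_subv G_sym G_irr m_gt0 r exy dxl)); rewrite ?subv_neq_inl.
Qed.

Definition hub_colors := [seq ocol (w l) | l <- enum 'I_n].

Lemma hub_col_gt0 i : 0 < ocol (w i).
Proof.
rewrite lt0n; apply/eqP => col_i.
have [j] := @exists_ord_notin n [:: i] (ltnW n_gt2).
have [j'] := @exists_ord_notin n [:: i; j] n_gt2.
rewrite !inE negb_or => /andP [ij' jj'] ij.
pose s := [seq w l | l <- enum [set~ i]] ++ [:: h j u0; h j u1; h j' u0].
have size_s : size s = n + 2 by rewrite size_cat size_map -cardE cardsC1 card_ord /=; lia.
suff : size s < k by lia.
apply: (col_zero_degree G_sym G_irr m_gt0 hc (s := s) col_i).
- have notin_hubs x : (inr x \in [seq w l | l <- enum [set~ i]]) = false by apply/mapP => -[].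
  rewrite cat_uniq map_inj_uniq ?enum_uniq; last by move=> ? ? [].
  have inr_eq x y : (inr x == inr y :> 'I_n + 'I_n * 'I_p) = (x == y) by [].
  by rewrite /= !notin_hubs !inE !inr_eq !xpair_eqE eqxx [j == j']eq_sym (negbTE jj').
- rewrite all_cat; apply/andP; split; last by rewrite /= /K_rel ij ij'.
  by apply/allP => x /mapP [l]; rewrite mem_enum !inE => il ->; rewrite ncorona_hub eq_sym.
Qed.

Lemma hub_col_inj l l' : l != l' -> ocol (w l) != ocol (w l').
Proof. by move=> neq; apply: col_adj; rewrite ?hub_col_gt0 // ncorona_hub. Qed.

Lemma hub_colors_uniq : uniq hub_colors.
Proof.
by rewrite map_inj_uniq ?enum_uniq // => l l'; apply: contra_eq; apply: hub_col_inj.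
Qed.

Lemma hub_colors_range y : y \in hub_colors -> 0 < y < k.
Proof. by case/mapP => l _ ->; rewrite hub_col_gt0 ltn_ord. Qed.

Lemma size_hub_colors : size hub_colors = n.
Proof. by rewrite size_map size_enum_ord. Qed.

Lemma n_lt_k : n < k.
Proof.
have := uniq_size_range hub_colors_uniq hub_colors_range.
by rewrite size_hub_colors; have := ltn_ord (c (inl (w (Ordinal n_gt2)))); lia.
Qed.

Definition hub_free y := y \notin hub_colors.

Lemma hub_freeP y : reflect (forall l, ocol (w l) != y) (hub_free y).
Proof.
apply: (iffP idP) => [free l|neq].
  by apply: contraNneq free => <-; apply: map_f; rewrite mem_enum.
by apply/mapP => -[l _ col_l]; move: (neq l); rewrite col_l eqxx.
Qed.

Lemma hub_free_unique y y' : 0 < y < k -> 0 < y' < k -> hub_free y -> hub_free y' -> y = y'.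
Proof.
rewrite /hub_free => ry ry' fy fy'; apply/eqP; apply: contraT => neq.
have := @uniq_size_range [:: y, y' & hub_colors] 1 k.
rewrite /= size_hub_colors inE negb_or neq fy fy' hub_colors_uniq => /(_ isT).
suff /[swap] /[apply] : forall x, x \in [:: y, y' & hub_colors] -> 0 < x < k by lia.
by move=> x; rewrite !inE => /orP [/eqP -> | /orP [/eqP -> | /hub_colors_range]].
Qed.

Lemma exists_hub_col_lt3 : exists a, ocol (w a) < 3.
Proof.
case: (pickP [pred a | ocol (w a) < 3]) => [a lt3|ge3]; first by exists a.
have := @uniq_size_range hub_colors 3 k hub_colors_uniq; rewrite size_hub_colors.
suff /[swap] /[apply] : forall y, y \in hub_colors -> 2 < y < k by lia.
by move=> y /mapP [l _ ->]; rewrite ltn_ord andbT ltnNge -ltnS; move: (ge3 l) => /= ->.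
Qed.

Lemma not_hub_free y : ~~ hub_free y -> exists l, ocol (w l) = y.
Proof. by move/negbNE/mapP => [l _ ->]; exists l. Qed.

Lemma path_hub_adj j u l : l != j -> G (h j u) (w l).
Proof. by rewrite G_sym ncorona_hub. Qed.

Lemma hub_path_neq l j u : l != j -> ocol (w l) != ocol (h j u).
Proof. by move=> neq; apply: col_adj; rewrite ?hub_col_gt0 // ncorona_hub. Qed.

Lemma path_col_hub_free j u : 2 < ocol (h j u) -> hub_free (ocol (h j u)).
Proof. by move=> big; apply/hub_freeP => l; rewrite eq_sym; apply: col_far. Qed.

Lemma path_edge_not_both_free j : 2 < ocol (h j u0) -> 2 < ocol (h j u1) -> False.
Proof.
move=> big0 big1; have /negP := col_adj (path_edge_adj j) (ltnW (ltnW big0)); apply; apply/eqP.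
by apply: hub_free_unique; rewrite ?ltn_ord ?andbT; solve [lia | exact: path_col_hub_free].
Qed.

Lemma col_subv_hub_free x l r : G x (w l) -> 1 < col (sub x (w l) r) ->
  hub_free (col (sub x (w l) r)).
Proof.
move=> exl big; apply/hub_freeP => l'; rewrite eq_sym.
rewrite (subvC G_sym G_irr) // in big *; apply: col_subv_hub => //.
- exact: dist_le_hubs.
- by rewrite G_sym.
Qed.

Lemma path_edge_col_eq0 j y : ocol (h j u0) = y -> ocol (h j u1) = y -> y = 0.
Proof.
move=> <- col1; apply/eqP; rewrite -leqn0 leqNgt; apply/negP => pos.
by move: (col_adj (path_edge_adj j) pos); rewrite col1 eqxx.
Qed.

Lemma third_col_hub x1 x2 x3 : x2 != x1 -> x3 != x1 -> x3 != x2 ->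
  0 < x1 < k -> 0 < x2 < k -> 0 < x3 < k ->
  (1 < x1 -> hub_free x1) -> (1 < x2 -> hub_free x2) -> 1 < x3 /\ ~~ hub_free x3.
Proof.
move=> n21 n31 n32 r1 r2 r3 f1 f2; case: (ltnP 1 x3) => [big3|small3].
- split=> //; apply/negP => f3; case: (ltnP 1 x1) => [big1|small1].
  + by move: n31; rewrite (hub_free_unique r1 r3 (f1 big1) f3) eqxx.
  + have big2 : 1 < x2 by lia.
    by move: n32; rewrite (hub_free_unique r2 r3 (f2 big2) f3) eqxx.
- have big1 : 1 < x1 by lia.
  have big2 : 1 < x2 by lia.
  by move: n21; rewrite (hub_free_unique r1 r2 (f1 big1) (f2 big2)) eqxx.
Qed.

Section PathCol0.
Variables (i : 'I_n) (q : 'I_p).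
Hypothesis col_iq : ocol (h i q) = 0.
Local Notation s y r := (sub (h i q) y r).

Lemma path_col0_sub_range y r : G (h i q) y -> 0 < col (s y r) < k.
Proof. by move=> ey; rewrite ltn_ord andbT (col_subv_gt0 G_sym G_irr hc r ey col_iq). Qed.

Lemma path_col0_sub_neq y y' r r' : G (h i q) y -> G (h i q) y' -> y != y' ->
  col (s y r) != col (s y' r').
Proof.
move=> ey ey' neq; apply: (col_subv_neq G_sym G_irr hc) => //.
by case/andP: (path_col0_sub_range r ey).
Qed.

Lemma path_col0_hub_sub_range l r : l != i -> 0 < col (s (w l) r) < k.
Proof. by move=> li; apply/path_col0_sub_range/path_hub_adj. Qed.

Lemma path_col0_hub_sub_neq l l' r r' : l != i -> l' != i -> l != l' ->
  col (s (w l) r) != col (s (w l') r').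
Proof. by move=> li l'i ll'; apply: path_col0_sub_neq; [apply: path_hub_adj.. | exact: ll']. Qed.

Lemma path_col0_hub_sub_free l r : l != i -> 1 < col (s (w l) r) -> hub_free (col (s (w l) r)).
Proof. by move=> li; apply/col_subv_hub_free/path_hub_adj. Qed.

Lemma path_col0_n_le3 : n <= 3.
Proof.
rewrite leqNgt; apply/negP => n_gt3.
have [l1] := @exists_ord_notin n [:: i] (ltnW n_gt2).
have [l2] := @exists_ord_notin n [:: i; l1] n_gt2.
have [l3] := @exists_ord_notin n [:: i; l1; l2] n_gt3.
rewrite !inE !negb_or => /and3P [l3i l31 l32] /andP [l2i l21] l1i.
have [big3 /negP []] := third_col_hub (path_col0_hub_sub_neq r0 r0 l2i l1i l21)
  (path_col0_hub_sub_neq r0 r0 l3i l1i l31) (path_col0_hub_sub_neq r0 r0 l3i l2i l32)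
  (path_col0_hub_sub_range r0 l1i) (path_col0_hub_sub_range r0 l2i)
  (path_col0_hub_sub_range r0 l3i)
  (path_col0_hub_sub_free (r := r0) l1i) (path_col0_hub_sub_free (r := r0) l2i).
exact: path_col0_hub_sub_free.
Qed.

Lemma path_col0_exists_hub_col1 : exists a, ocol (w a) = 1.
Proof.
have [l1] := @exists_ord_notin n [:: i] (ltnW n_gt2).
have [l2] := @exists_ord_notin n [:: i; l1] n_gt2.
rewrite !inE negb_or => /andP [l2i l21] l1i.
apply: not_hub_free; apply/negP => free1.
have one_k : 0 < 1 < k by have := n_lt_k; lia.
have not_big l : l != i -> 1 < col (s (w l) r0) -> False.
  move=> li big; have := path_col0_hub_sub_range r0 li => range.
  by have := hub_free_unique one_k range free1 (path_col0_hub_sub_free li big); lia.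
have := path_col0_hub_sub_neq r0 r0 l2i l1i l21.
have := path_col0_hub_sub_range r0 l1i; have := path_col0_hub_sub_range r0 l2i.
case: (ltnP 1 (col (s (w l1) r0))) => [|small1]; first by move/(not_big _ l1i).
case: (ltnP 1 (col (s (w l2) r0))) => [|small2]; first by move/(not_big _ l2i).
lia.
Qed.

Lemma path_col0_hub_col : 1 < ocol (w i) < 4.
Proof.
have [v qv] := P_rel_neighbor q p_gt1.
have eqv : G (h i q) (h i v) by rewrite /= eqxx.
have [l1] := @exists_ord_notin n [:: i] (ltnW n_gt2).
have [l2] := @exists_ord_notin n [:: i; l1] n_gt2.
rewrite !inE negb_or => /andP [l2i l21] l1i.
have [big_t /not_hub_free [l col_l]] := third_col_hub (path_col0_hub_sub_neq r0 r0 l2i l1i l21)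
  (path_col0_sub_neq r0 r0 eqv (path_hub_adj q l1i) isT)
  (path_col0_sub_neq r0 r0 eqv (path_hub_adj q l2i) isT)
  (path_col0_hub_sub_range r0 l1i) (path_col0_hub_sub_range r0 l2i) (path_col0_sub_range r0 eqv)
  (path_col0_hub_sub_free (r := r0) l1i) (path_col0_hub_sub_free (r := r0) l2i).
have li : l = i.
  apply/eqP; apply: contraT => li.
  by have := col_subv_hub (dist_le_edge (path_hub_adj q li)) eqv big_t; rewrite col_l eqxx.
rewrite -li col_l big_t ltnNge /=; apply/negP => big.
by have := col_subv_far (w l) eqv big; rewrite col_l eqxx.
Qed.

Lemma path_col0_sub_hub_col1 a r : ocol (w a) = 1 -> a != i ->
  1 < col (s (w a) r) /\ hub_free (col (s (w a) r)).
Proof.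
move=> col_a ai; have eqa := path_hub_adj q ai.
have eaq : G (w a) (h i q) by rewrite G_sym.
have := path_col0_sub_range r eqa; have := col_subv_end G_sym G_irr hc r eaq.
rewrite -(subvC G_sym G_irr r eqa) col_a => ne1 range.
have big : 1 < col (s (w a) r) by lia.
by split=> //; apply: path_col0_hub_sub_free.
Qed.

End PathCol0.

Lemma hub_cols12_path_col0 a b j u : ocol (w a) = 1 -> ocol (w b) = 2 -> a != j -> b != j ->
  ocol (h j u) = 0 -> False.
Proof.
move=> col_a col_b aj bj col0.
have not12 v : ocol (h j v) != 1 /\ ocol (h j v) != 2.
  by rewrite -{1}col_a -col_b !(eq_sym (ocol (h j v))) !hub_path_neq.
have col_sub v : ocol (h j v) = 0 -> col (sub (h j v) (w a) r0) = 4.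
  (* w_a, w_b, w_j use 1, 2, 3, and k <= 5 leaves 4 as the only free value *)
  move=> col0'; have [big free] := path_col0_sub_hub_col1 col0' r0 col_a aj.
  have := path_col0_n_le3 col0'; have := path_col0_hub_col col0'.
  have /hub_freeP/(_ j) := free; have /hub_freeP/(_ a) := free; have /hub_freeP/(_ b) := free.
  rewrite col_a col_b; have := hub_col_inj bj; rewrite col_b.
  by have := ltn_ord (c (sub (h j v) (w a) r0)); lia.
have [v uv] := P_rel_neighbor u p_gt1.
have ejuv : G (h j u) (h j v) by rewrite /= eqxx.
have col_j : ocol (w j) = 3.
  by have := path_col0_hub_col col0; have := hub_col_inj bj; rewrite col_b; lia.
have [eau eav] : G (w a) (h j u) /\ G (w a) (h j v) by rewrite !ncorona_hub.
case: (posnP (ocol (h j v))) => [col0' | pos].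
- have uv_neq : h j u != h j v by apply: contraTneq ejuv => ->; rewrite G_irr.
  have pos_t : 0 < col (sub (w a) (h j u) r0) by rewrite (subvC G_sym G_irr r0 eau) col_sub.
  have := col_subv_neq G_sym G_irr hc r0 eau eav uv_neq pos_t.
  by rewrite (subvC G_sym G_irr r0 eau) (subvC G_sym G_irr r0 eav) !col_sub.
- have := col_far (isT : w j != h j v); rewrite col_j => /(_ isT).
  have := col_subv_far (h j v) (r := r0) (path_hub_adj u aj); rewrite col_sub // => /(_ isT).
  have := not12 v; have := path_col0_n_le3 col0; have := ltn_ord (c (inl (h j v))).
  lia.
Qed.

Lemma hub_cols12_absurd a b : ocol (w a) = 1 -> ocol (w b) = 2 -> False.
Proof.
move=> col_a col_b.
have [j] := @exists_ord_notin n [:: a; b] n_gt2; rewrite !inE negb_or => /andP [ja jb].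
have [aj bj] : a != j /\ b != j by rewrite !(eq_sym _ j).
have big u : 2 < ocol (h j u).
  have [/(hub_cols12_path_col0 col_a col_b aj bj) []|pos] := posnP (ocol (h j u)).
  by have := hub_path_neq u aj; have := hub_path_neq u bj; rewrite col_a col_b; lia.
exact: path_edge_not_both_free (big u0) (big u1).
Qed.

Lemma path_col0_hub_free2 i q a : ocol (h i q) = 0 -> ocol (w a) = 1 -> hub_free 2 -> False.
Proof.
move=> col0 col_a /hub_freeP free2.
have col_i : ocol (w i) = 3 by have := path_col0_hub_col col0; have := free2 i; lia.
have [j] := @exists_ord_notin n [:: a; i] n_gt2; rewrite !inE negb_or => /andP [ja ji].
have col_j u : ocol (h j u) = 2.
  have one_k : 0 < 2 < k by have := n_lt_k; lia.
  have not0 : ocol (h j u) != 0.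
    apply/negP => /eqP /path_col0_hub_col; have := free2 j; have := hub_col_inj ji.
    by rewrite col_i; lia.
  have not1 : ocol (h j u) != 1 by rewrite -col_a eq_sym hub_path_neq // eq_sym.
  have small : ocol (h j u) <= 2.
    rewrite leqNgt; apply/negP => /[dup] big /path_col_hub_free free.
    have range : 0 < ocol (h j u) < k by rewrite ltn_ord; lia.
    have := hub_free_unique one_k range (introT (hub_freeP _) free2) free; lia.
  lia.
by have := path_edge_col_eq0 (col_j u0) (col_j u1).
Qed.

Lemma path_col0_absurd i q : ocol (h i q) = 0 -> False.
Proof.
move=> col0; have [a col_a] := path_col0_exists_hub_col1 col0.
case: (boolP (hub_free 2)) => [free2 | /not_hub_free [b col_b]].
- exact: path_col0_hub_free2 col0 col_a free2.
- exact: hub_cols12_absurd col_a col_b.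
Qed.

Lemma exists_path_col0 : exists j u, ocol (h j u) = 0.
Proof.
case: (pickP [pred x : 'I_n * 'I_p | ocol (h x.1 x.2) == 0]) => [[j u] /eqP col0 | nz].
  by exists j, u.
exfalso; have [a lt3] := exists_hub_col_lt3; have pos_a := hub_col_gt0 a.
pose y := 3 - ocol (w a).
have ry : 0 < y < k by have := n_lt_k; lia.
have path_big j u : j != a -> ocol (h j u) != y -> 2 < ocol (h j u).
  move=> ja; have aj : a != j by rewrite eq_sym.
  by have := hub_path_neq u aj; move: (nz (j, u)) => /= /negbT; lia.
case: (boolP (hub_free y)) => [free_y | /not_hub_free [b col_b]].
- have [j] := @exists_ord_notin n [:: a] (ltnW n_gt2); rewrite inE => ja.
  have col_y u : ocol (h j u) = y.
    apply/eqP; apply: contraT => /(path_big _ _ ja) big.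
    have range : 0 < ocol (h j u) < k by rewrite ltn_ord; lia.
    by have := hub_free_unique ry range free_y (path_col_hub_free big); lia.
  by have := path_edge_col_eq0 (col_y u0) (col_y u1); lia.
- have [j] := @exists_ord_notin n [:: a; b] n_gt2; rewrite !inE negb_or => /andP [ja jb].
  have big u : 2 < ocol (h j u).
    by apply: path_big ja _; rewrite -col_b eq_sym hub_path_neq // eq_sym.
  exact: path_edge_not_both_free (big u0) (big u1).
Qed.

Lemma lower_bound_absurd : False.
Proof. by have [j [u /path_col0_absurd]] := exists_path_col0. Qed.

End LowerBound.

Theorem theorem1 (n p m : nat) (hn : 3 <= n) (hp : 2 <= p) (hm : 1 <= m) :
  packing_chromatic_number_is
    (fssd_rel (ncorona_rel (K_rel n) (P_rel p)) m) (n + 3).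
Proof.
split; first by exists (@corona_coloring n p m); apply: corona_coloring_packing.
move=> k [c hc]; rewrite leqNgt; apply/negP => lt_k.
by apply: (lower_bound_absurd hn hp hm hc); lia.
Qed.
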